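(* Consider the optimization problem $\mathbf{P}_{\rm SICD}$ over the variables $\boldsymbol{\tau}_0=(\tau_{0,t})_{t=1}^T$ and $\mathbf{E}=(E_{i,t})_{1\le i\le K,\,1\le t\le T}$: maximize $\displaystyle\sum_{t=1}^{T}\sum_{i=1}^{K}(1-\tau_{0,t})\log_2(1+x_{i,t})$, where $x_{i,t}=\dfrac{g_{i,t}E_{i,t}}{\sigma^2(1-\tau_{0,t})+\sum_{j=i+1}^{K}g_{j,t}E_{j,t}}$ (empty sums are $0$), subject to (i) $\sum_{n=1}^{t}E_{i,n}\le\sum_{n=1}^{t}\gamma_{i,n}\tau_{0,n}$ for all $i,t$; (ii) $x_{i,t}\ge S_i^{\rm th}$ for all $i,t$, understood in the form $g_{i,t}E_{i,t}\ge S_i^{\rm th}\big(\sigma^2(1-\tau_{0,t})+\sum_{j=i+1}^{K}g_{j,t}E_{j,t}\big)$; (iii) $0\le\tau_{0,t}\le1$ for all $t$; (iv) $E_{i,t}\ge0$ for all $i,t$. Then $\mathbf{P}_{\rm SICD}$ is a convex optimization problem: its objective is a concave function of $(\boldsymbol{\tau}_0,\mathbf{E})$ and its feasible set is convex.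
   Context: There are $K$ users and a horizon of $T$ time slots of unit length. In slot $t$, a fraction $\tau_{0,t}$ is used for downlink wireless energy transfer and the remaining $1-\tau_{0,t}$ for simultaneous uplink transmission. $g_{i,t}>0$ is the uplink channel power gain of user $i$ in slot $t$, $\sigma^2>0$ the noise power, $\gamma_{i,t}=\eta_i h_{i,t}P_B>0$ the harvested power of user $i$ in slot $t$ (harvested energy $\gamma_{i,t}\tau_{0,t}$), $E_{i,t}$ the energy consumed by user $i$ in slot $t$, and $S_i^{\rm th}$ given decodability thresholds. $x_{i,t}$ is the SINR of user $i$ under successive interference cancellation in the fixed decoding order $1,\dots,K$. For $\tau_{0,t}=1$ the slot-$t$ term of the objective is taken to be $0$ (its limiting value). *)

From HB Require Import structures.
From mathcomp Require Import all_boot all_order all_algebra.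
From mathcomp Require Import reals exp.
Set Implicit Arguments. Unset Strict Implicit. Unset Printing Implicit Defensive.
Import Order.TTheory GRing.Theory Num.Theory.
Local Open Scope ring_scope.

Section SICD.
Variable R : realType.
Variables K T : nat.

Definition log2 (x : R) : R := ln x / ln 2.

(* Denominator of x_{i,t}: sigma^2 (1 - tau_{0,t}) + sum_{j=i+1}^K g_{j,t} E_{j,t}
   (users indexed 0..K-1, decoding order 0,1,...,K-1). *)
Definition interf (g : 'I_K -> 'I_T -> R) (sigma2 : R) (tau : 'I_T -> R)
  (E : 'I_K -> 'I_T -> R) (i : 'I_K) (t : 'I_T) : R :=
  sigma2 * (1 - tau t) + \sum_(j < K | (i < j)%N) g j t * E j t.

Definition sinr g sigma2 tau E (i : 'I_K) (t : 'I_T) : R :=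
  g i t * E i t / interf g sigma2 tau E i t.

(* Slot-t term of the objective; 0 when tau_{0,t} = 1 (limiting value). *)
Definition slot_term g sigma2 tau E (t : 'I_T) : R :=
  if tau t == 1 then 0
  else \sum_(i < K) (1 - tau t) * log2 (1 + sinr g sigma2 tau E i t).

Definition objective g sigma2 tau E : R := \sum_(t < T) slot_term g sigma2 tau E t.

Definition in_domain (tau : 'I_T -> R) (E : 'I_K -> 'I_T -> R) : Prop :=
  (forall t, 0 <= tau t <= 1) /\ (forall i t, 0 <= E i t).

Definition feasible g sigma2 (gamma : 'I_K -> 'I_T -> R) (Sth : 'I_K -> R)
  (tau : 'I_T -> R) (E : 'I_K -> 'I_T -> R) : Prop :=
  [/\ (forall i t, \sum_(n < T | (n <= t)%N) E i n
                   <= \sum_(n < T | (n <= t)%N) gamma i n * tau n),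
      (forall i t, g i t * E i t >= Sth i * interf g sigma2 tau E i t),
      (forall t, 0 <= tau t <= 1)
    & (forall i t, 0 <= E i t)].

Definition comb_tau (l : R) (tau1 tau2 : 'I_T -> R) : 'I_T -> R :=
  fun t => l * tau1 t + (1 - l) * tau2 t.
Definition comb_E (l : R) (E1 E2 : 'I_K -> 'I_T -> R) : 'I_K -> 'I_T -> R :=
  fun i t => l * E1 i t + (1 - l) * E2 i t.

End SICD.

From HB Require Import structures.
From mathcomp Require Import all_boot all_order all_algebra.
From mathcomp Require Import reals exp.
From mathcomp Require Import lra ring.
Import Order.TTheory GRing.Theory Num.Theory.
Local Open Scope ring_scope.

(* Under successive interference cancellation the rates of one slot telescope
   to the sum rate [a ln (1 + S / (sigma^2 a))], with [a = 1 - tau] and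
   [S = sum_i g_i E_i] the total received power.  This is the perspective of
   the concave function [s |-> ln (1 + s / sigma^2)], hence jointly concave
   in [(a, S)]; as [a] and [S] are affine in [(tau, E)], every slot term is
   concave.  All constraints are linear inequalities, so the feasible set is
   convex. *)

Section Convexity.
Variable R : realType.
Implicit Types (a c l m s x y : R).

Lemma sumr_comb (I : Type) (r : seq I) (P : pred I) (F G : I -> R) l :
  \sum_(i <- r | P i) (l * F i + (1 - l) * G i) =
  l * \sum_(i <- r | P i) F i + (1 - l) * \sum_(i <- r | P i) G i.
Proof. by rewrite big_split /= -!mulr_sumr. Qed.

Lemma mulr_comb a l x y :
  a * (l * x + (1 - l) * y) = l * (a * x) + (1 - l) * (a * y).
Proof. by ring. Qed.

Lemma sumr_mul_comb (I : Type) (r : seq I) (P : pred I) (w F G : I -> R) l :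
  \sum_(i <- r | P i) w i * (l * F i + (1 - l) * G i) =
  l * \sum_(i <- r | P i) w i * F i + (1 - l) * \sum_(i <- r | P i) w i * G i.
Proof. by rewrite -sumr_comb; apply: eq_bigr => i _; apply: mulr_comb. Qed.

Lemma ler_comb [l x1 x2 y1 y2] : 0 <= l <= 1 -> x1 <= y1 -> x2 <= y2 ->
  l * x1 + (1 - l) * x2 <= l * y1 + (1 - l) * y2.
Proof.
move=> /andP[l0 l1] le1 le2.
by apply: lerD; apply: ler_wpM2l => //; rewrite subr_ge0.
Qed.

Lemma comb_ge0 [l x y] : 0 <= l <= 1 -> 0 <= x -> 0 <= y ->
  0 <= l * x + (1 - l) * y.
Proof.
by move=> l01 x0 y0; have := ler_comb l01 x0 y0; rewrite !mulr0 addr0.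
Qed.

Lemma comb_le1 [l x y] : 0 <= l <= 1 -> x <= 1 -> y <= 1 ->
  l * x + (1 - l) * y <= 1.
Proof.
by move=> l01 x1 y1; have := ler_comb l01 x1 y1; rewrite !mulr1 subrKC.
Qed.

Lemma ln_sub_le x y : 0 < x -> 0 < y -> ln x - ln y <= x / y - 1.
Proof.
move=> x0 y0; rewrite -ln_div ?posrE //.
rewrite -[X in ln X](subrKC 1) le_ln1Dx //.
by rewrite ltrBrDl subrr divr_gt0.
Qed.

(* At [a = 0] the division by zero makes this [0], its limiting value. *)
Definition ln_persp c a s := a * ln (1 + s / (c * a)).

Lemma ln_persp_arg_ge1 [c a s] : 0 < c -> 0 <= a -> 0 <= s ->
  1 <= 1 + s / (c * a).
Proof. by move=> c0 a0 s0; rewrite lerDl divr_ge0 ?mulr_ge0 // ltW. Qed.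

Lemma mul_ln_persp_arg_le a [c m s] : 0 < c -> 0 <= m -> 0 <= s ->
  m * a * (1 + s / (c * a)) <= m * a + m * s / c.
Proof.
move=> c0 m0 s0; have [->|a0] := eqVneq a 0.
  by rewrite !mulr0 mul0r add0r divr_ge0 ?mulr_ge0 // ltW.
suff -> : m * a * (1 + s / (c * a)) = m * a + m * s / c by [].
by field; rewrite a0 lt0r_neq0.
Qed.

Lemma ln_persp_concave c l a1 a2 s1 s2 : 0 < c -> 0 <= l <= 1 ->
  0 <= a1 -> 0 <= a2 -> 0 <= s1 -> 0 <= s2 ->
  l * ln_persp c a1 s1 + (1 - l) * ln_persp c a2 s2 <=
  ln_persp c (l * a1 + (1 - l) * a2) (l * s1 + (1 - l) * s2).
Proof.
move=> c0 l01 a10 a20 s10 s20; rewrite /ln_persp (mulrA l) (mulrA (1 - l)).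
have /andP[l0 l1] := l01; have l'0 : 0 <= 1 - l by rewrite subr_ge0.
set w1 := l * a1; set w2 := (1 - l) * a2; set A := w1 + w2.
set S := l * s1 + (1 - l) * s2.
have w10 : 0 <= w1 by rewrite mulr_ge0.
have w20 : 0 <= w2 by rewrite mulr_ge0.
have [A0|A0] := eqVneq A 0.
  have [-> ->] : w1 = 0 /\ w2 = 0 by move: A0; rewrite /A; lra.
  by rewrite A0 !mul0r addr0.
have Agt0 : 0 < A by rewrite lt0r A0 addr_ge0.
set r1 := 1 + s1 / (c * a1); set r2 := 1 + s2 / (c * a2).
set r := 1 + S / (c * A).
have r10 : 0 < r1 by apply: lt_le_trans (ln_persp_arg_ge1 c0 a10 s10).
have r20 : 0 < r2 by apply: lt_le_trans (ln_persp_arg_ge1 c0 a20 s20).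
have r0 : 0 < r.
  exact: lt_le_trans (ln_persp_arg_ge1 c0 (ltW Agt0) (comb_ge0 l01 s10 s20)).
have Ar : A * r = A + S / c by rewrite /r /S; field; rewrite A0 lt0r_neq0.
have wr_le : (w1 * r1 + w2 * r2) / r <= A.
  rewrite ler_pdivrMr // Ar.
  apply: le_trans (lerD (mul_ln_persp_arg_le a1 c0 l0 s10)
                        (mul_ln_persp_arg_le a2 c0 l'0 s20)) _.
  by rewrite /A /w1 /w2 /S [(_ + _) / c]mulrDl; lra.
have ln_le w x : 0 <= w -> 0 < x -> w * (ln x - ln r) <= w * (x / r - 1).
  by move=> w0 x0; rewrite ler_wpM2l // ln_sub_le.
(* Weighted by [w_k], [ln r_k - ln r <= r_k / r - 1] sums to at most
   [(w1 r1 + w2 r2) / r - A <= 0]. *)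
have : w1 * (ln r1 - ln r) + w2 * (ln r2 - ln r) <= 0.
  apply: le_trans (lerD (ln_le _ _ w10 r10) (ln_le _ _ w20 r20)) _.
  have -> : w1 * (r1 / r - 1) + w2 * (r2 / r - 1) = (w1 * r1 + w2 * r2) / r - A.
    by rewrite /A; field; rewrite lt0r_neq0.
  by rewrite subr_le0.
rewrite /A mulrDl !mulrBr; lra.
Qed.

Lemma sic_sum_rate (K : nat) (p : 'I_K -> R) c :
  0 < c -> (forall i, 0 <= p i) ->
  \sum_(i < K) ln (1 + p i / (c + \sum_(j < K | (i < j)%N) p j)) =
  ln (1 + (\sum_(j < K) p j) / c).
Proof.
move=> c0 p0.
pose D (n : nat) := c + \sum_(j < K | (n <= j)%N) p j.
have D_gt0 n : 0 < D n by rewrite ltr_pwDl ?sumr_ge0.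
have D_step (i : 'I_K) : D i = p i + D i.+1.
  rewrite /D (bigD1 i) //= addrCA; congr (_ + (_ + _)).
  by apply: eq_bigl => j; rewrite ltn_neqAle andbC eq_sym.
have term (i : 'I_K) : ln (1 + p i / D i.+1) = ln (D i) - ln (D i.+1).
  rewrite -ln_div ?posrE // D_step; congr ln; field; exact: lt0r_neq0.
transitivity (\sum_(i < K) (ln (D i) - ln (D i.+1))); first exact: eq_bigr.
rewrite -(big_mkord xpredT (fun i => ln (D i) - ln (D i.+1))).
rewrite -[LHS]opprK -sumrN (eq_bigr _ (fun i _ => opprB _ _)) telescope_sumr //.
have DK : D K = c.
  by rewrite /D big_pred0 ?addr0 // => j; rewrite leqNgt ltn_ord.
rewrite opprB -ln_div ?posrE // DK /D (eq_bigl xpredT) //.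
by congr ln; field; exact: lt0r_neq0.
Qed.

Section SICD.
Variables K T : nat.
Variables (g : 'I_K -> 'I_T -> R) (sigma2 : R).
Hypotheses (g_gt0 : forall i t, 0 < g i t) (sigma2_gt0 : 0 < sigma2).
Implicit Types (tau : 'I_T -> R) (E : 'I_K -> 'I_T -> R).

Lemma power_ge0 E i t : 0 <= E i t -> 0 <= g i t * E i t.
Proof. exact/mulr_ge0/ltW. Qed.

Lemma slot_term_ln_persp tau E t : tau t <= 1 -> (forall i, 0 <= E i t) ->
  slot_term g sigma2 tau E t =
  ln_persp sigma2 (1 - tau t) (\sum_(i < K) g i t * E i t) / ln 2.
Proof.
move=> tau_le1 E_ge0; rewrite /slot_term /ln_persp.
have [->|tau_neq1] := eqVneq (tau t) 1; first by rewrite subrr !mul0r.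
have a_gt0 : 0 < 1 - tau t by rewrite subr_gt0 lt_neqAle tau_neq1.
rewrite /log2 /sinr /interf -mulr_sumr -mulr_suml mulrA.
rewrite (@sic_sum_rate K (fun i => g i t * E i t)) //; first exact: mulr_gt0.
by move=> i; apply: power_ge0.
Qed.

Lemma interf_comb l tau1 E1 tau2 E2 i t :
  interf g sigma2 (comb_tau l tau1 tau2) (comb_E l E1 E2) i t =
  l * interf g sigma2 tau1 E1 i t + (1 - l) * interf g sigma2 tau2 E2 i t.
Proof. by rewrite /interf /comb_tau /comb_E sumr_mul_comb; ring. Qed.

Lemma objective_concave l tau1 E1 tau2 E2 : 0 <= l <= 1 ->
  in_domain tau1 E1 -> in_domain tau2 E2 ->
  l * objective g sigma2 tau1 E1 + (1 - l) * objective g sigma2 tau2 E2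
    <= objective g sigma2 (comb_tau l tau1 tau2) (comb_E l E1 E2).
Proof.
move=> l01 [tau1_01 E1_ge0] [tau2_01 E2_ge0].
rewrite /objective !mulr_sumr -big_split; apply: ler_sum => t _ /=.
have /andP[tau1_ge0 tau1_le1] := tau1_01 t.
have /andP[tau2_ge0 tau2_le1] := tau2_01 t.
rewrite !slot_term_ln_persp //; last first.
- by move=> i; apply: comb_ge0.
- exact: comb_le1.
have -> : 1 - comb_tau l tau1 tau2 t =
          l * (1 - tau1 t) + (1 - l) * (1 - tau2 t).
  by rewrite /comb_tau; ring.
rewrite /comb_E sumr_mul_comb (mulrA l) (mulrA (1 - l)) -mulrDl.
rewrite ler_pM2r ?invr_gt0 ?ln_gt0 ?ltr1n //.
have sum_ge0 E : (forall i, 0 <= E i t) -> 0 <= \sum_(i < K) g i t * E i t.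
  by move=> E_ge0; rewrite sumr_ge0 // => i _; apply: power_ge0.
by apply: ln_persp_concave; rewrite ?subr_ge0 ?sum_ge0.
Qed.

Lemma feasible_comb gamma Sth l tau1 E1 tau2 E2 : 0 <= l <= 1 ->
  feasible g sigma2 gamma Sth tau1 E1 -> feasible g sigma2 gamma Sth tau2 E2 ->
  feasible g sigma2 gamma Sth (comb_tau l tau1 tau2) (comb_E l E1 E2).
Proof.
move=> l01 [harv1 sinr1 tau1_01 E1_ge0] [harv2 sinr2 tau2_01 E2_ge0]; split.
- move=> i t; rewrite /comb_tau /comb_E sumr_comb sumr_mul_comb.
  exact: ler_comb.
- by move=> i t; rewrite interf_comb /comb_E !mulr_comb; apply: ler_comb.
- move=> t; have /andP[tau1_ge0 tau1_le1] := tau1_01 t.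
  have /andP[tau2_ge0 tau2_le1] := tau2_01 t.
  by rewrite comb_ge0 ?comb_le1.
- by move=> i t; rewrite comb_ge0.
Qed.

End SICD.
End Convexity.

Theorem theorem1 (R : realType) (K T : nat)
  (g : 'I_K -> 'I_T -> R) (sigma2 : R) (gamma : 'I_K -> 'I_T -> R)
  (Sth : 'I_K -> R)
  (hg : forall i t, 0 < g i t) (hsigma : 0 < sigma2)
  (hgamma : forall i t, 0 < gamma i t) :
  (* the objective is concave on the domain (iii)-(iv) *)
  (forall (l : R) tau1 E1 tau2 E2, 0 <= l <= 1 ->
     in_domain tau1 E1 -> in_domain tau2 E2 ->
     l * objective g sigma2 tau1 E1 + (1 - l) * objective g sigma2 tau2 E2
       <= objective g sigma2 (comb_tau l tau1 tau2) (comb_E l E1 E2))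
  /\
  (* the feasible set is convex *)
  (forall (l : R) tau1 E1 tau2 E2, 0 <= l <= 1 ->
     feasible g sigma2 gamma Sth tau1 E1 -> feasible g sigma2 gamma Sth tau2 E2 ->
     feasible g sigma2 gamma Sth (comb_tau l tau1 tau2) (comb_E l E1 E2)).
Proof.
split; first exact: objective_concave.
exact: feasible_comb.
Qed.
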